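(* Let $\mathcal{F}=(W,\preceq,\mathcal{V})$ be a finite poset model and $w_1,w_2\in W$. If $w_1\approx_\pm w_2$ then $w_1\equiv_\eta w_2$.
   Context: Fix a set PL of proposition letters. A poset model is $\mathcal{F}=(W,\preceq,\mathcal{V})$ with $(W,\preceq)$ a partial order and $\mathcal{V}:\mathrm{PL}\to\mathcal{P}(W)$. $[m;n]=\{i\in\mathbb{N}:m\le i\le n\}$, $[m;n)=\{i:m\le i<n\}$. An undirected path of length $\ell$ from $w$ is $\pi:[0;\ell]\to W$ with $\pi(0)=w$ and, for each $i\in[0;\ell)$, $\pi(i)\preceq\pi(i+1)$ or $\pi(i+1)\preceq\pi(i)$. A $\downarrow$-path is an undirected path of length $\ell\ge1$ with $\pi(\ell)\preceq\pi(\ell-1)$. A $\pm$-path is a $\downarrow$-path of length $\ell\ge2$ with $\pi(0)\preceq\pi(1)$. SLCS$_\eta$ formulas: $\Phi::=p\mid\neg\Phi\mid\Phi_1\wedge\Phi_2\mid\eta(\Phi_1,\Phi_2)$; $w\models p$ iff $w\in\mathcal{V}(p)$; negation, conjunction standard; $w\models\eta(\Phi_1,\Phi_2)$ iff some $\pm$-path $\pi:[0;\ell]\to W$ from $w$ has $\pi(\ell)\models\Phi_2$ and $\pi(i)\models\Phi_1$ for all $i\in[0;\ell)$. $w_1\equiv_\eta w_2$ means $w_1,w_2$ satisfy the same SLCS$_\eta$ formulas. A weak $\pm$-bisimulation is a symmetric relation $B\subseteq W\times W$ such that whenever $B(w_1,w_2)$: (1) for every $p$, $w_1\in\mathcal{V}(p)$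 iff $w_2\in\mathcal{V}(p)$; (2) for all $u_1,d_1\in W$ with ($w_1\preceq u_1$ or $u_1\preceq w_1$) and $d_1\preceq u_1$, there is a $\pm$-path $\pi_2:[0;\ell_2]\to W$ from $w_2$ with $B(d_1,\pi_2(\ell_2))$ and, for all $j\in[0;\ell_2)$, $B(w_1,\pi_2(j))$ or $B(u_1,\pi_2(j))$. $w_1\approx_\pm w_2$ iff some weak $\pm$-bisimulation contains $(w_1,w_2)$. *)

From mathcomp Require Import all_boot.
Set Implicit Arguments. Unset Strict Implicit. Unset Printing Implicit Defensive.

Record poset_model (PL : Type) := PosetModel {
  pm_W :> finType;
  pm_le : rel pm_W;
  pm_V : PL -> pred pm_W;
  pm_refl : reflexive pm_le;
  pm_antisym : antisymmetric pm_le;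
  pm_trans : transitive pm_le
}.

Section Defs.
Variables (PL : Type) (F : poset_model PL).
Local Notation W := (pm_W F).
Local Notation le := (@pm_le PL F).

(* undirected path of length l from w: pi : [0;l] -> W, represented by nat -> W
   with only values on [0;l] relevant *)
Definition undirected_path (pi : nat -> W) (l : nat) (w : W) : Prop :=
  pi 0 = w /\ forall i, i < l -> le (pi i) (pi i.+1) \/ le (pi i.+1) (pi i).

Definition down_path (pi : nat -> W) (l : nat) (w : W) : Prop :=
  undirected_path pi l w /\ 1 <= l /\ le (pi l) (pi l.-1).

Definition pm_path (pi : nat -> W) (l : nat) (w : W) : Prop :=
  down_path pi l w /\ 2 <= l /\ le (pi 0) (pi 1).

End Defs.

Inductive slcs_eta (PL : Type) : Type :=
| SAtom : PL -> slcs_eta PL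
| SNeg : slcs_eta PL -> slcs_eta PL
| SAnd : slcs_eta PL -> slcs_eta PL -> slcs_eta PL
| SEta : slcs_eta PL -> slcs_eta PL -> slcs_eta PL.

Fixpoint sat (PL : Type) (F : poset_model PL) (w : F) (phi : slcs_eta PL) : Prop :=
  match phi with
  | SAtom p => @pm_V PL F p w
  | SNeg phi1 => ~ sat w phi1
  | SAnd phi1 phi2 => sat w phi1 /\ sat w phi2
  | SEta phi1 phi2 => exists (pi : nat -> F) (l : nat),
      pm_path pi l w /\ sat (pi l) phi2 /\ (forall i, i < l -> sat (pi i) phi1)
  end.

Definition eta_equiv (PL : Type) (F : poset_model PL) (w1 w2 : F) : Prop :=
  forall phi : slcs_eta PL, sat w1 phi <-> sat w2 phi.

Definition weak_pm_bisim (PL : Type) (F : poset_model PL) (B : F -> F -> Prop) : Prop :=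
  (forall x y, B x y -> B y x) /\
  forall w1 w2, B w1 w2 ->
    (forall p, @pm_V PL F p w1 <-> @pm_V PL F p w2) /\
    (forall u1 d1 : F, (pm_le w1 u1 \/ pm_le u1 w1) -> pm_le d1 u1 ->
       exists (pi2 : nat -> F) (l2 : nat),
         pm_path pi2 l2 w2 /\ B d1 (pi2 l2) /\
         (forall j, j < l2 -> B w1 (pi2 j) \/ B u1 (pi2 j))).

Definition weak_pm_bisimilar (PL : Type) (F : poset_model PL) (w1 w2 : F) : Prop :=
  exists B : F -> F -> Prop, weak_pm_bisim B /\ B w1 w2.

From mathcomp Require Import all_boot.
From mathcomp Require Import zify.

Set Implicit Arguments.
Unset Strict Implicit.
Unset Printing Implicit Defensive.

(* A weak ±-bisimulation transfers a ↓-path edge by edge: each edge is matched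
   by a ±-path from the related point, and these are concatenated.  For the
   final, downward edge u >= d the clause is used with u1 := u itself, so the
   interior of the matching path stays related to points of the original path;
   hence ±-paths witnessing [eta] are transferred, and satisfaction is preserved
   by induction on formulas. *)

Section PathCat.
Variable T : Type.

Definition path_cat (f g : nat -> T) (l j : nat) : T :=
  if j <= l then f j else g (j - l).

Lemma path_catl f g l j : j <= l -> path_cat f g l j = f j.
Proof. by rewrite /path_cat => ->. Qed.

Lemma path_catr f g l j : f l = g 0 -> path_cat f g l (l + j) = g j.
Proof.
rewrite /path_cat => Efg; case: j => [|j]; first by rewrite addn0 leqnn.
by rewrite addnS ltnNge leq_addr /= -addnS addKn.
Qed.

End PathCat.

Section PmPath.
Variables (PL : Type) (F : poset_model PL).

Lemma undirected_path_cat (f g : nat -> F) l1 l2 w :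
  undirected_path f l1 w -> undirected_path g l2 (f l1) ->
  undirected_path (path_cat f g l1) (l1 + l2) w.
Proof.
move=> [f0 fstep] [g0 gstep]; split; first by rewrite path_catl.
move=> i lt_i; case: (ltnP i l1) => [lt_il1 | le_l1i].
  by rewrite !path_catl //; [exact: fstep | exact: ltnW].
rewrite -(subnKC le_l1i) -addnS !path_catr //; apply: gstep; lia.
Qed.

Lemma pm_path_cat (f g : nat -> F) l1 l2 w :
  pm_path f l1 w -> pm_path g l2 (f l1) ->
  pm_path (path_cat f g l1) (l1 + l2) w.
Proof.
move=> [[fu _] [l1_ge2 f01]] [[gu [l2_gt0 gdown]] _].
split; last by split; [lia | rewrite !path_catl //; lia].
split; first exact: undirected_path_cat.
have g0 : f l1 = g 0 by case: gu.
have -> : (l1 + l2).-1 = l1 + l2.-1 by lia.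
by split; [lia | rewrite !path_catr].
Qed.

Lemma down_path_behead (pi : nat -> F) l w :
  down_path pi l.+2 w -> down_path (fun i => pi i.+1) l.+1 (pi 1).
Proof. by move=> [[_ step] [_ down]]; split; split=> // i lt_i; apply: step. Qed.

End PmPath.

Section Bisimulation.
Variables (PL : Type) (F : poset_model PL) (B : F -> F -> Prop).
Hypothesis bisimB : weak_pm_bisim B.

Lemma bisim_down_step (a b x : F) : B a x -> pm_le b a ->
  exists (pi : nat -> F) l, pm_path pi l x /\ B b (pi l) /\
    (forall j, j < l -> B a (pi j)).
Proof.
have [_ zig] := bisimB; move=> /zig [_ forth] le_ba.
have [pi [l [pi_path [Bend Bint]]]] := forth a b (or_introl (pm_refl a)) le_ba.
by exists pi, l; split=> //; split=> // j /Bint [].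
Qed.

Lemma bisim_step (a b x : F) : B a x -> pm_le a b \/ pm_le b a ->
  exists (pi : nat -> F) l, pm_path pi l x /\ B b (pi l) /\
    (forall j, j < l -> B a (pi j) \/ B b (pi j)).
Proof.
move=> Bax [le_ab | le_ba].
  have [_ zig] := bisimB; have [_ forth] := zig _ _ Bax.
  exact: (forth b b (or_introl le_ab) (pm_refl b)).
have [pi [l [pi_path [Bend Bint]]]] := bisim_down_step Bax le_ba.
by exists pi, l; split=> //; split=> // j /Bint; left.
Qed.

Lemma bisim_down_path l : forall (pi : nat -> F) w x,
  down_path pi l w -> B w x ->
  exists (pi' : nat -> F) l', pm_path pi' l' x /\ B (pi l) (pi' l') /\
    (forall j, j < l' -> exists2 i, i < l & B (pi i) (pi' j)).
Proof.
elim: l => [|[|l] IH] pi w x pi_down Bwx; have [[pi0 step] [l_gt0 down]] := pi_down.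
- by [].
- rewrite -pi0 in Bwx.
  have [pi' [l' [path' [Bend Bint]]]] := bisim_down_step Bwx down.
  by exists pi', l'; split=> //; split=> // j /Bint; exists 0.
- rewrite -pi0 in Bwx.
  have [pi1 [l1 [path1 [Bend1 Bint1]]]] := bisim_step Bwx (step 0 isT).
  have [pi2 [l2 [path2 [Bend2 Bint2]]]] := IH _ _ _ (down_path_behead pi_down) Bend1.
  have pi12 : pi1 l1 = pi2 0 by case: path2 => [[[]]].
  exists (path_cat pi1 pi2 l1), (l1 + l2).
  split; first exact: pm_path_cat path1 path2.
  split; first by rewrite path_catr.
  move=> j lt_j; case: (ltnP j l1) => [lt_jl1 | le_l1j].
    by rewrite path_catl ?(ltnW lt_jl1) //; case: (Bint1 j lt_jl1); [exists 0 | exists 1].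
  rewrite -(subnKC le_l1j) path_catr //; have [|i lt_i Bi] := Bint2 (j - l1); first lia.
  by exists i.+1.
Qed.

Lemma bisim_sat phi (x y : F) : B x y -> sat x phi -> sat y phi.
Proof.
have [symB zig] := bisimB.
elim: phi x y => [p | phi IH | phi1 IH1 phi2 IH2 | phi1 IH1 phi2 IH2] x y Bxy /=.
- by have [atoms _] := zig _ _ Bxy; move/(atoms p).
- by move=> nx sy; apply/nx/(IH y x)/sy/symB.
- by case=> ??; split; [apply: (IH1 x) | apply: (IH2 x)].
- case=> pi [l [pi_path [sat_end sat_int]]].
  have [pi' [l' [path' [Bend Bint]]]] := bisim_down_path pi_path.1 Bxy.
  exists pi', l'; split=> //; split; first exact: IH2 sat_end.
  by move=> j /Bint [i lt_i Bi]; apply: IH1 Bi (sat_int i lt_i).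
Qed.

End Bisimulation.

Theorem lemma12 (PL : Type) (F : poset_model PL) (w1 w2 : F) :
  weak_pm_bisimilar w1 w2 -> eta_equiv w1 w2.
Proof.
case=> B [bisimB Bw12] phi; have [symB _] := bisimB.
by split; apply: (bisim_sat bisimB); last exact: symB.
Qed.
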